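(* Let $\mathcal L$ be a finite distributive lattice, $p\in\mathcal L$ and $S\subseteq N(p)$ with $|S|=i$. Let $r=\bigwedge\{q: q\in S\}$ and let $T$ be the set of all upper neighbors of $r$ in the interval $[r,p]$. Then (1) $|T|=i$ and $\bigvee T=p$; (2) $\mathrm{lcm}(u_p,\{u_q\}_{q\in S})=\mathrm{lcm}(u_r,\{u_s\}_{s\in T})$; (3) for any $r'\neq r$ and any $T'\subseteq M(r')$, one has $\mathrm{lcm}(u_{r'},\{u_{s'}\}_{s'\in T'})\neq\mathrm{lcm}(u_p,\{u_q\}_{q\in S})$.
   Context: Let $P$ be the set of join-irreducible elements of $\mathcal L$ (elements with exactly one lower neighbor); for $p\in\mathcal L$ put $\ell(p)=\{q\in P:q\le p\}$. Let $K$ be a field, $S=K[x_p,y_p:p\in P]$ and for $q\in\mathcal L$, $u_q=\prod_{p\in\ell(q)}x_p\prod_{p\in P\setminus\ell(q)}y_p$. $N(p)$ is the set of lower neighbors of $p$ (elements covered by $p$), $M(r)$ the set of upper neighbors of $r$ (elements covering $r$); $[r,p]=\{t:r\le t\le p\}$. *)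

From HB Require Import structures.
From mathcomp Require Import all_boot all_order.
Set Implicit Arguments. Unset Strict Implicit. Unset Printing Implicit Defensive.
Import Order.TTheory.
Local Open Scope order_scope.

Section LatticeDefs.
Variables (d : Order.disp_t) (L : finTBDistrLatticeType d).

Definition covers (x y : L) : bool :=
  (x < y) && [forall z : L, ~~ ((x < z) && (z < y))].

Definition lower_nbrs (p : L) : {set L} := [set q | covers q p].
Definition upper_nbrs (r : L) : {set L} := [set s | covers r s].

Definition join_irr (q : L) : bool := #|lower_nbrs q| == 1%N.

(* the variables x_p (true, p) and y_p (false, p) of S = K[x_p, y_p : p in P] *)
Definition var := (bool * {q : L | join_irr q})%type.

(* monomials of S, represented by their exponent vectors *)
Definition monomial := {ffun var -> nat}.

(* u_q = prod_{p in l(q)} x_p * prod_{p in P \ l(q)} y_p *)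
Definition u (q : L) : monomial :=
  [ffun v : var => nat_of_bool (if v.1 then val v.2 <= q else ~~ (val v.2 <= q))].

Definition lcm_fam (a : L) (B : {set L}) : monomial :=
  [ffun v : var => maxn (u a v) (\max_(b in B) u b v)].

End LatticeDefs.

From HB Require Import structures.
From mathcomp Require Import all_boot all_order.
Set Implicit Arguments. Unset Strict Implicit. Unset Printing Implicit Defensive.
Import Order.TTheory.
Local Open Scope order_scope.

(* For q in S put mate q := p `&` \meet_(x in S :\ q) x.  Then q `|` mate q = p and
   q `&` mate q = r, so by distributivity the interval [r, mate q] is a transpose
   of the covering pair q, p and mate q covers r.  Conversely, a cover s of r below p
   is not below some q in S; then s `&` q = r and s = s `&` (q `|` mate q) <= mate q,
   so s = mate q.  Thus q |-> mate q is a bijection from S onto T, and T joins to p.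
   In a distributive lattice join-irreducibles are join-prime, so the x-part of
   lcm(u_a, {u_b}_(b in B)) records the join-irreducibles below a `|` \join B and
   its y-part those not below a `&` \meet B; as join-irreducibles separate
   elements, the lcm and this pair determine each other.  It is (p, r) both for
   (p, S) and for (r, T), while for T' inside M(r') the meet is r'. *)

Lemma exists_maximal d (T : finPOrderType d) (P : pred T) x : P x ->
  exists2 z, P z & forall w, z < w -> ~~ P w.
Proof.
move=> Px; have [z Pz zmax] := arg_maxnP (fun z => #|[set w | w <= z]|) Px.
exists z => // w zw; apply/negP=> /zmax /=; rewrite leqNgt; apply/negP/negPn.
apply: proper_card; apply/properP; split.
  by apply/subsetP=> v; rewrite !inE => /le_trans; apply; apply: ltW.
by exists w; rewrite !inE ?lexx // lt_geF.
Qed.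

Lemma exists_minimal d (T : finPOrderType d) (P : pred T) x : P x ->
  exists2 z, P z & forall w, w < z -> ~~ P w.
Proof. exact: (@exists_maximal _ T^d). Qed.

Section DistrLattice.
Variables (d : Order.disp_t) (L : finTBDistrLatticeType d).
Implicit Types (a b c j x y z : L).

Lemma covers_lt a b : covers a b -> a < b.
Proof. by case/andP. Qed.

Lemma covers_mid a b x : covers a b -> a <= x -> x <= b -> (x == a) || (x == b).
Proof.
case/andP=> _ /forallP /(_ x) + ax xb.
by rewrite !lt_neqAle ax xb !andbT negb_and !negbK eq_sym.
Qed.

Lemma exists_covered a z : a < z -> exists2 c, a <= c & covers c z.
Proof.
move=> az; pose P c := (a <= c) && (c < z).
have /(@exists_maximal _ _ P) [c /andP [ac cz] cmax] : P a by rewrite /P lexx az.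
exists c => //; rewrite /covers cz; apply/forallP=> w; apply/negP=> /andP [cw wz].
by move: (cmax w cw); rewrite /P wz (le_trans ac (ltW cw)).
Qed.

Lemma covers_meetE a b c : covers a b -> a <= c -> ~~ (b <= c) -> b `&` c = a.
Proof.
move=> ab ac bc; have a_le : a <= b `&` c by rewrite lexI (ltW (covers_lt ab)) ac.
case/orP: (covers_mid ab a_le (leIl b c)) => /eqP // /meet_idPl b_le.
by rewrite b_le in bc.
Qed.

Lemma covers_joinE a b c : covers a b -> c <= b -> ~~ (c <= a) -> a `|` c = b.
Proof.
move=> ab cb ca; have le_b : a `|` c <= b by rewrite leUx (ltW (covers_lt ab)) cb.
case/orP: (covers_mid ab (leUl a c) le_b) => /eqP // /join_idPl c_le.
by rewrite c_le in ca.
Qed.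

Lemma covers_join_lower a b z : covers a z -> covers b z -> a != b -> a `|` b = z.
Proof.
move=> az bz ab; have ba : ~~ (b <= a).
  apply: contra ab => ba; case/orP: (covers_mid bz ba (ltW (covers_lt az))) => // /eqP a_z.
  by move: (covers_lt az); rewrite a_z ltxx.
exact: covers_joinE az (ltW (covers_lt bz)) ba.
Qed.

Lemma covers_meet a b c : covers a b -> c <= b -> ~~ (c <= a) -> covers (a `&` c) c.
Proof.
move=> ab cb ca; rewrite /covers lt_leAnge leIr lexI lexx andbT ca.
apply/forallP=> z; apply/negP=> /andP [acz zc].
have za : ~~ (z <= a) by apply: contraTN acz => za; rewrite le_gtF // lexI za ltW.
have az_b := covers_joinE ab (le_trans (ltW zc) cb) za.
have : c <= z by rewrite -{1}(meet_idPl cb) -az_b meetUr leUx meetC (ltW acz) leIr.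
by rewrite lt_geF.
Qed.

Lemma joinx_meets (I : finType) (A : {set I}) (F : I -> L) x :
  x `|` \meet_(i in A) F i = \meet_(i in A) (x `|` F i).
Proof. by rewrite (big_morph (Order.join x) (joinIr x) (joinx1 x)). Qed.

Lemma join_irr_neq0 j : join_irr j -> j != \bot.
Proof.
apply: contraL => /eqP ->; rewrite /join_irr (_ : lower_nbrs _ = set0) ?cards0 //.
by apply/setP=> q; rewrite !inE /covers ltx0.
Qed.

Lemma join_irr_lt j c x : join_irr j -> covers c j -> x < j -> x <= c.
Proof.
case/cards1P=> c0 Nj cj /exists_covered [c' xc' c'j].
have /set1P -> : c \in [set c0] by rewrite -Nj inE.
by have /set1P <- : c' \in [set c0] by rewrite -Nj inE.
Qed.

Lemma join_irr_lexU j : join_irr j -> forall x y, (j <= x `|` y) = (j <= x) || (j <= y).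
Proof.
move=> Jj x y; apply/idP/idP => [jxy|/lexU2 //]; apply/negPn/negP; rewrite negb_or.
case/andP=> jx jy; have [c _ cj] : exists2 c, \bot <= c & covers c j.
  by apply: exists_covered; rewrite lt0x join_irr_neq0.
have below_c z : ~~ (j <= z) -> j `&` z <= c.
  by move=> jz; apply: join_irr_lt Jj cj _; rewrite lt_leAnge leIl lexI lexx jz.
have : j <= c by rewrite -(meet_idPl jxy) meetUr leUx !below_c.
by rewrite lt_geF ?covers_lt.
Qed.

Lemma exists_join_irr_sep x y : ~~ (x <= y) ->
  exists2 j, join_irr j & (j <= x) && ~~ (j <= y).
Proof.
move=> xy; pose P z := (z <= x) && ~~ (z <= y).
have /(@exists_minimal _ _ P) [z /andP [zx zy] zmin] : P x by rewrite /P lexx xy.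
exists z; rewrite ?zx ?zy //.
have below_y w : w < z -> w <= y.
  by move=> wz; move: (zmin w wz); rewrite /P (le_trans (ltW wz) zx) negbK.
have [c _ cz] : exists2 c, \bot <= c & covers c z.
  by apply: exists_covered; rewrite lt0x; apply: contraNneq zy => ->; apply: le0x.
apply/cards1P; exists c; apply/setP=> w; rewrite !inE; apply/idP/eqP => [wz|-> //].
apply: contraNeq zy => wc.
by rewrite -(covers_join_lower wz cz wc) leUx !below_y ?covers_lt.
Qed.

Lemma le_join_irr x y : (forall j, join_irr j -> j <= x -> j <= y) -> x <= y.
Proof.
move=> xy; apply/negPn/negP => /exists_join_irr_sep [j Jj /andP [jx]].
by rewrite xy.
Qed.

Lemma join_irr_eq x y : (forall j, join_irr j -> (j <= x) = (j <= y)) -> x = y.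
Proof. by move=> xy; apply/le_anti; rewrite !le_join_irr // => j Jj; rewrite xy. Qed.

Lemma maxn_orb : {morph nat_of_bool : b1 b2 / b1 || b2 >-> maxn b1 b2}.
Proof. by case; case. Qed.

Lemma lcm_fam_x a (B : {set L}) (j : {q : L | join_irr q}) :
  lcm_fam a B (true, j) = (val j <= a `|` \join_(b in B) b).
Proof.
have Jj := valP j; rewrite ffunE /u ffunE /=.
rewrite (eq_bigr (fun b => nat_of_bool (val j <= b))) => [|b _]; last by rewrite ffunE.
have j_le0 : (val j <= \bot) = false by rewrite lex0 (negbTE (join_irr_neq0 Jj)).
rewrite -(big_morph _ maxn_orb (id2 := false) erefl).
rewrite -(big_morph (fun x => val j <= x) (join_irr_lexU Jj) j_le0).
by rewrite -maxn_orb join_irr_lexU.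
Qed.

Lemma lcm_fam_y a (B : {set L}) (j : {q : L | join_irr q}) :
  lcm_fam a B (false, j) = ~~ (val j <= a `&` \meet_(b in B) b).
Proof.
rewrite ffunE /u ffunE /=.
rewrite (eq_bigr (fun b => nat_of_bool (~~ (val j <= b)))) => [|b _]; last by rewrite ffunE.
rewrite -(big_morph _ maxn_orb (id2 := false) erefl).
rewrite -(big_morph negb negb_and (id2 := true) erefl).
rewrite -(big_morph (fun x => val j <= x) (lexI (val j)) (lex1 (val j))).
by rewrite -maxn_orb lexI negb_and.
Qed.

Lemma eq_lcm_fam a (B : {set L}) a' (B' : {set L}) :
  (lcm_fam a B == lcm_fam a' B') =
  (a `|` \join_(b in B) b == a' `|` \join_(b in B') b) &&
  (a `&` \meet_(b in B) b == a' `&` \meet_(b in B') b).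
Proof.
apply/eqP/andP => [eqF|[/eqP eqJ /eqP eqM]]; last first.
  by apply/ffunP=> -[[] j]; rewrite ?lcm_fam_x ?lcm_fam_y ?eqJ ?eqM.
move/ffunP: eqF => eqF; split; apply/eqP/join_irr_eq => j Jj.
  by move: (eqF (true, exist _ j Jj)); rewrite !lcm_fam_x => /(can_inj oddb).
by move: (eqF (false, exist _ j Jj)); rewrite !lcm_fam_y => /(can_inj oddb)/negb_inj.
Qed.

Section LowerNeighbours.
Variables (p : L) (S : {set L}).
Hypotheses (S_lower : S \subset lower_nbrs p) (S_neq0 : S != set0).

Local Notation r := (\meet_(q in S) q).

Let covers_p q : q \in S -> covers q p.
Proof. by move/(subsetP S_lower); rewrite inE. Qed.

Lemma meet_lower_nbrs_le : r <= p.
Proof.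
case/set0Pn: S_neq0 => q qS.
exact: le_trans (meets_inf _ qS) (ltW (covers_lt (covers_p qS))).
Qed.

Definition mate q := p `&` \meet_(x in S :\ q) x.

Lemma meet_mate q : q \in S -> q `&` mate q = r.
Proof.
move=> qS; rewrite (big_setD1 q qS) /= /mate meetCA; apply/meet_idPr.
exact: le_trans (leIl _ _) (ltW (covers_lt (covers_p qS))).
Qed.

Lemma join_mate q : q \in S -> q `|` mate q = p.
Proof.
move=> qS; rewrite /mate joinIr joinx_meets (join_idPr (ltW (covers_lt (covers_p qS)))).
apply/meet_idPl/meetsP => x; rewrite !inE eq_sym => /andP [qx xS].
by rewrite (covers_join_lower (covers_p qS) (covers_p xS) qx).
Qed.

Lemma mate_le q q' : q' \in S -> q' != q -> mate q <= q'.
Proof. by move=> q'S q'q; apply/leIxr/meets_inf; rewrite !inE q'q. Qed.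

Lemma mate_nle q : q \in S -> ~~ (mate q <= q).
Proof.
move=> qS; apply/negP => /join_idPl mq; have := covers_lt (covers_p qS).
by rewrite -(join_mate qS) mq ltxx.
Qed.

Lemma covers_mate q : q \in S -> covers r (mate q).
Proof.
move=> qS; rewrite -(meet_mate qS).
exact: covers_meet (covers_p qS) (leIl _ _) (mate_nle qS).
Qed.

Lemma mate_inj : {in S &, injective mate}.
Proof.
move=> q q' qS q'S eq_m; apply/eqP; apply: contraNT (mate_nle qS) => qq'.
by rewrite eq_m mate_le.
Qed.

Lemma upper_nbrs_meet : [set s in upper_nbrs r | (r <= s) && (s <= p)] = mate @: S.
Proof.
apply/setP=> s; apply/idP/imsetP => [|[q qS ->]]; last first.
  by rewrite !inE covers_mate // (ltW (covers_lt (covers_mate qS))) leIl.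
rewrite !inE => /andP [rs /andP [_ sp]].
have [q qS sq] : exists2 q, q \in S & ~~ (s <= q).
  apply/exists_inP; apply: contraTT (covers_lt rs) => /exists_inPn s_le.
  by rewrite le_gtF //; apply/meetsP => q /s_le /negPn.
have sm : s <= mate q.
  rewrite -(meet_idPl sp) -(join_mate qS) meetUr (covers_meetE rs _ sq) ?meets_inf //.
  by rewrite leUx leIr (ltW (covers_lt (covers_mate qS))).
exists q => //.
case/orP: (covers_mid (covers_mate qS) (ltW (covers_lt rs)) sm) => /eqP // sr.
by move: (covers_lt rs); rewrite sr ltxx.
Qed.

Lemma card_upper_nbrs_meet : #|[set s in upper_nbrs r | (r <= s) && (s <= p)]| = #|S|.
Proof. by rewrite upper_nbrs_meet card_in_imset //; apply: mate_inj. Qed.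

Lemma join_upper_nbrs_meet :
  \join_(s in [set s in upper_nbrs r | (r <= s) && (s <= p)]) s = p.
Proof.
rewrite upper_nbrs_meet; apply/le_anti/andP; split.
  by apply/joinsP => _ /imsetP [q _ ->]; apply: leIl.
set J := \join_(s in mate @: S) s.
have mate_le_J q : q \in S -> mate q <= J.
  by move=> qS; apply: (joins_sup (fun x => x)); apply: imset_f.
have r_le_J : r <= J.
  case/set0Pn: S_neq0 => q qS.
  exact: le_trans (ltW (covers_lt (covers_mate qS))) (mate_le_J q qS).
rewrite -(join_idPl r_le_J) joinx_meets; apply/meetsP => q qS.
by rewrite -(join_mate qS) leUx leUr lexUl ?mate_le_J.
Qed.

End LowerNeighbours.

End DistrLattice.

Theorem lemma3p5 (d : Order.disp_t) (L : finTBDistrLatticeType d)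
    (p : L) (S : {set L}) (i : nat) :
  S \subset lower_nbrs p -> #|S| = i -> (0 < i)%N ->
  let r := \meet_(q in S) q in
  let T := [set s in upper_nbrs r | (r <= s) && (s <= p)] in
  [/\ #|T| = i /\ \join_(s in T) s = p,
      lcm_fam p S = lcm_fam r T &
      forall (r' : L) (T' : {set L}), r' != r -> T' \subset upper_nbrs r' ->
        lcm_fam r' T' != lcm_fam p S].
Proof.
move=> S_lower cardS i_gt0 r T.
have S_neq0 : S != set0 by rewrite -card_gt0 cardS.
have join_T : \join_(s in T) s = p := join_upper_nbrs_meet S_lower S_neq0.
have join_S : p `|` \join_(q in S) q = p.
  by apply/join_idPl/joinsP => q /(subsetP S_lower); rewrite inE => /covers_lt/ltW.
have meet_S : p `&` \meet_(q in S) q = r.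
  exact/meet_idPr/meet_lower_nbrs_le.
have meet_above a (B : {set L}) : {in B, forall b, a <= b} -> a `&` \meet_(b in B) b = a.
  by move=> aB; apply/meet_idPl/meetsP.
split.
- split; last exact: join_T.
  by rewrite card_upper_nbrs_meet.
- apply/eqP; rewrite eq_lcm_fam join_S join_T meet_S meet_above.
    by rewrite (join_idPr (meet_lower_nbrs_le S_lower S_neq0)) !eqxx.
  by move=> s; rewrite !inE => /and3P [_ ->].
- move=> r' T' r'_neq T'_up.
  rewrite eq_lcm_fam meet_S meet_above ?(negbTE r'_neq) ?andbF //.
  by move=> s /(subsetP T'_up); rewrite inE => /covers_lt/ltW.
Qed.
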